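(* Let $n\ge2$, $1\le r\le n-1$, $\alpha,\beta,\gamma\in\mathbb{Z}_2^{n-r}$, $\alpha',\beta',\gamma'\in\mathbb{Z}_2^{r}$, $\omega=\omega(\alpha,\beta,\gamma)$ and $\omega'=\omega(\alpha',\beta',\gamma')$. Then $\mathrm{adp}^{\mathrm{XR}}_r(\alpha'\|\alpha,\ \beta'\|\beta\to\gamma\|\gamma')=0$ if and only if for some $X\in\{1,\dots,7\}$ the word $\omega'$ satisfies the pattern $M_X$ and $\omega$ satisfies at least one pattern in the list $P_X$, where: $M_1=$ [.*d00*], $P_1$: [$\alpha_0$*], [$\beta_0$*], [0$\hat0$*], [0$\hat0$*1.*], [0$\hat0$*2$\alpha_0$*], [0$\hat0$*4$\beta_0$*], [0$\hat0$*7], [0$\hat0$*7$\gamma_1$*$1_7$], [1$\hat1$*], [1$\hat1$*0.*], [1$\hat1$*3$\alpha_0$*], [1$\hat1$*5$\beta_0$*], [1$\hat1$*6], [1$\hat1$*6$\gamma_0$*$0_6$]; $M_2=$ [.*e22*], $P_2$: [$\alpha_0$*], [2$\hat2$*], [2$\hat2$*3.*], [2$\hat2$*0$\alpha_0$*], [2$\hat2$*5$\gamma_1$*$1_7$], [3$\hat3$*], [3$\hat3$*2.*], [3$\hat3$*1$\alpha_0$*], [3$\hat3$*4$\gamma_0$*$0_6$]; $M_3=$ [.*e44*], $P_3$: [$\beta_0$*], [4$\hat4$*], [4$\hat4$*5.*], [4$\hat4$*0$\beta_0$*], [4$\hat4$*3$\gamma_1$*$1_7$], [5$\hat5$*], [5$\hat5$*4.*],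 [5$\hat5$*1$\beta_0$*], [5$\hat5$*2$\gamma_0$*$0_6$]; $M_4=$ [.*d66*], $P_4$: [6$\hat6$*7.*], [6$\hat6$*1$\gamma_1$*$1_7$], [7$\hat7$*6.*], [7$\hat7$*0$\gamma_0$*$0_6$]; $M_5=$ [.*d], $P_5$: [0*], [1*]; $M_6=$ [.*], $P_6$: [.*d00*], [.*e11*]; $M_7=$ [$\gamma_0$*], $P_7$: [.*d].
   Context: For $x\in\mathbb{Z}_2^m$ write $x=(x_0,\dots,x_{m-1})$, identified with the integer $\sum_i x_i2^{m-1-i}$ ($x_0$ most significant); arithmetic on $\mathbb{Z}_2^n$ is modulo $2^n$. $\oplus$ is bitwise XOR, $x\lll r=(x_r,\dots,x_{n-1},x_0,\dots,x_{r-1})$, and $\alpha\|\beta=(\alpha_0,\dots,\alpha_{m-1},\beta_0,\dots,\beta_{k-1})$ is concatenation. For $f:(\mathbb{Z}_2^n)^2\to\mathbb{Z}_2^n$, $\mathrm{adp}^f(\alpha,\beta\to\gamma)=4^{-n}\#\{(x,y): f(x+\alpha,y+\beta)=f(x,y)+\gamma\}$; $\mathrm{adp}^{\mathrm{XR}}_r$ is this for $f(x,y)=(x\oplus y)\lll r$. For $\alpha,\beta,\gamma\in\mathbb{Z}_2^m$ the octal word $\omega(\alpha,\beta,\gamma)\in\{0,\dots,7\}^m$ has symbols $\omega_i=4\alpha_i+2\beta_i+\gamma_i$; symbols are also viewed as elements of $\mathbb{Z}_2^3$ so $\oplus$ applies to them. Patterns: a pattern is written between [ (most significant end) and ] (least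 significant end), and a word satisfies it if the whole word, read from $\omega_0$ to $\omega_{m-1}$, matches it in the sense of regular expressions, where each pattern symbol matches one octal symbol as follows: a digit $t$ matches exactly $t$; '.' matches any symbol; e matches $0,3,5,6$; d matches $1,2,4,7$; $\hat t$ matches $t, t\oplus3, t\oplus5$; $\alpha_0$ matches $0,1,2,3$; $\alpha_1$ matches $4,5,6,7$; $\beta_0$ matches $0,1,4,5$; $\beta_1$ matches $2,3,6,7$; $\gamma_0$ matches $0,2,4,6$; $\gamma_1$ matches $1,3,5,7$; $0_6$ matches $0,6$; $1_7$ matches $1,7$; and s* (for a pattern symbol s) matches zero or more consecutive symbols each matched by s. *)

From mathcomp Require Import all_boot all_order all_algebra.
Set Implicit Arguments. Unset Strict Implicit. Unset Printing Implicit Defensive.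
Import GRing.Theory Num.Theory.

(* integer value  sum_i x_i 2^(m-1-i)  (x_0 most significant) *)
Definition bv_val (x : seq bool) : nat := foldl (fun acc (b : bool) => 2 * acc + b) 0 x.

Definition bv_of (n k : nat) : n.-tuple bool :=
  [tuple odd (k %/ 2 ^ (n.-1 - i)) | i < n].

(* reading a sequence as an n-bit vector (exact when size s = n) *)
Definition tup_of (n : nat) (s : seq bool) : n.-tuple bool :=
  [tuple nth false s i | i < n].

Definition bv_add (n : nat) (x y : n.-tuple bool) : n.-tuple bool :=
  bv_of n ((bv_val x + bv_val y) %% 2 ^ n).

Definition bv_xor (n : nat) (x y : n.-tuple bool) : n.-tuple bool :=
  [tuple (tnth x i) (+) (tnth y i) | i < n].

Definition bv_rotl (n r : nat) (x : n.-tuple bool) : n.-tuple bool :=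
  tup_of n (rot r x).

Definition adp (n : nat) (f : n.-tuple bool -> n.-tuple bool -> n.-tuple bool)
  (a b g : n.-tuple bool) : rat :=
  ((#|[pred p : n.-tuple bool * n.-tuple bool |
        f (bv_add p.1 a) (bv_add p.2 b) == bv_add (f p.1 p.2) g]|)%:R
   / (4 ^ n)%:R)%R.

Definition XR (n r : nat) (x y : n.-tuple bool) : n.-tuple bool :=
  bv_rotl r (bv_xor x y).

Definition adpXR (n r : nat) (a b g : n.-tuple bool) : rat := adp (XR r) a b g.

Definition omega (a b c : seq bool) : seq nat :=
  [seq 4 * nat_of_bool p.1.1 + 2 * nat_of_bool p.1.2 + nat_of_bool p.2 | p : bool * bool * bool <- zip (zip a b) c].

Inductive pitem := Sy of pred nat | St of pred nat.
Definition pattern := seq pitem.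

(* whole-word regular-expression matching, read from omega_0 to omega_{m-1} *)
Fixpoint matchp (p : pattern) : seq nat -> bool :=
  match p with
  | [::] => fun w => nilp w
  | Sy c :: p' => fun w => if w is s :: w' then c s && matchp p' w' else false
  | St c :: p' => fix g w :=
      matchp p' w || (if w is s :: w' then c s && g w' else false)
  end.

Definition cdig (t : nat) : pred nat := fun s => s == t.
Definition cany : pred nat := fun _ => true.
Definition ce : pred nat := fun s => s \in [:: 0; 3; 5; 6].
Definition cd : pred nat := fun s => s \in [:: 1; 2; 4; 7].
Definition chat (t : nat) : pred nat :=
  fun s => (s == t) || (s == Nat.lxor t 3) || (s == Nat.lxor t 5).
Definition ca0 : pred nat := fun s => s \in [:: 0; 1; 2; 3].
Definition ca1 : pred nat := fun s => s \in [:: 4; 5; 6; 7].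
Definition cb0 : pred nat := fun s => s \in [:: 0; 1; 4; 5].
Definition cb1 : pred nat := fun s => s \in [:: 2; 3; 6; 7].
Definition cg0 : pred nat := fun s => s \in [:: 0; 2; 4; 6].
Definition cg1 : pred nat := fun s => s \in [:: 1; 3; 5; 7].
Definition c06 : pred nat := fun s => s \in [:: 0; 6].
Definition c17 : pred nat := fun s => s \in [:: 1; 7].

Definition D (t : nat) := Sy (cdig t).

Definition Mpat (X : nat) : pattern :=
  match X with
  | 1 => [:: St cany; Sy cd; D 0; St (cdig 0)]
  | 2 => [:: St cany; Sy ce; D 2; St (cdig 2)]
  | 3 => [:: St cany; Sy ce; D 4; St (cdig 4)]
  | 4 => [:: St cany; Sy cd; D 6; St (cdig 6)]
  | 5 => [:: St cany; Sy cd]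
  | 6 => [:: St cany]
  | 7 => [:: St cg0]
  | _ => [::]
  end.

Definition Ppats (X : nat) : seq pattern :=
  match X with
  | 1 => [:: [:: St ca0]; [:: St cb0];
            [:: D 0; St (chat 0)];
            [:: D 0; St (chat 0); D 1; St cany];
            [:: D 0; St (chat 0); D 2; St ca0];
            [:: D 0; St (chat 0); D 4; St cb0];
            [:: D 0; St (chat 0); D 7];
            [:: D 0; St (chat 0); D 7; St cg1; Sy c17];
            [:: D 1; St (chat 1)];
            [:: D 1; St (chat 1); D 0; St cany];
            [:: D 1; St (chat 1); D 3; St ca0];
            [:: D 1; St (chat 1); D 5; St cb0];
            [:: D 1; St (chat 1); D 6];
            [:: D 1; St (chat 1); D 6; St cg0; Sy c06]]
  | 2 => [:: [:: St ca0];
            [:: D 2; St (chat 2)];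
            [:: D 2; St (chat 2); D 3; St cany];
            [:: D 2; St (chat 2); D 0; St ca0];
            [:: D 2; St (chat 2); D 5; St cg1; Sy c17];
            [:: D 3; St (chat 3)];
            [:: D 3; St (chat 3); D 2; St cany];
            [:: D 3; St (chat 3); D 1; St ca0];
            [:: D 3; St (chat 3); D 4; St cg0; Sy c06]]
  | 3 => [:: [:: St cb0];
            [:: D 4; St (chat 4)];
            [:: D 4; St (chat 4); D 5; St cany];
            [:: D 4; St (chat 4); D 0; St cb0];
            [:: D 4; St (chat 4); D 3; St cg1; Sy c17];
            [:: D 5; St (chat 5)];
            [:: D 5; St (chat 5); D 4; St cany];
            [:: D 5; St (chat 5); D 1; St cb0];
            [:: D 5; St (chat 5); D 2; St cg0; Sy c06]]
  | 4 => [:: [:: D 6; St (chat 6); D 7; St cany];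
            [:: D 6; St (chat 6); D 1; St cg1; Sy c17];
            [:: D 7; St (chat 7); D 6; St cany];
            [:: D 7; St (chat 7); D 0; St cg0; Sy c06]]
  | 5 => [:: [:: St (cdig 0)]; [:: St (cdig 1)]]
  | 6 => [:: [:: St cany; Sy cd; D 0; St (cdig 0)];
            [:: St cany; Sy ce; D 1; St (cdig 1)]]
  | 7 => [:: [:: St cany; Sy cd]]
  | _ => [::]
  end.

From mathcomp Require Import all_boot all_order all_algebra zify.
Set Implicit Arguments. Unset Strict Implicit. Unset Printing Implicit Defensive.
Import GRing.Theory Num.Theory.

(* The differential probability vanishes iff the equation
   ((x + A) xor (y + B)) <<< r = ((x xor y) <<< r) + G has no solution (x, y).
   Cutting every n-bit word after its first r bits, the rotation swaps the two
   halves, so the equation becomes, on each half, three simultaneous additions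
   x + alpha, y + beta and (x xor y) + gamma, the halves being coupled only
   through carries: the carries out of x + alpha and y + beta on the low half
   enter the high half, and the carry out of the third addition on the high half
   enters the low half.  Scanning a half bit by bit, the set of feasible
   (carry-in, carry-out) triples is computed by a finite automaton over the
   octal word omega; the patterns are regular expressions, recognised by finite
   automata as well.  Both sides of the equivalence therefore only depend on the
   states reached by the product automata on the two octal words, and the
   equivalence is checked by computation on all reachable pairs of states. *)

(** * Bit vectors and carries *)

Lemma mixed_radix_inj K q1 q2 t1 t2 :
  t1 < K -> t2 < K -> q1 * K + t1 = q2 * K + t2 -> q1 = q2 /\ t1 = t2.
Proof.
move=> t1K t2K e; have K0 : 0 < K by apply: leq_ltn_trans t1K.
split; [have := congr1 (divn^~ K) e | have := congr1 (modn^~ K) e].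
  by rewrite !divnMDl // !divn_small // !addn0.
by rewrite !modnMDl !modn_small.
Qed.

Lemma modn_mixed K R q t : t < K -> (q * K + t) %% (R * K) = q %% R * K + t.
Proof.
move=> tK; case: R => [|R]; first by rewrite !modn0.
rewrite {1}(divn_eq q R.+1) mulnDl -mulnA -addnA modnMDl modn_small //.
have := ltn_pmod q (ltn0Sn R); nia.
Qed.

Lemma carry_split K s : s < K * 2 -> s = s %% K + (K <= s) * K.
Proof.
case: (leqP K s) => [Ks sK2 | sK _]; last by rewrite modn_small ?addn0.
rewrite -[in s %% K](subnK Ks) modnDr modn_small /=; lia.
Qed.

Lemma bv_val_cat s t : bv_val (s ++ t) = bv_val s * 2 ^ size t + bv_val t.
Proof.
rewrite /bv_val foldl_cat; move: (foldl _ 0 s) => a.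
elim: t a => [|b t IH] a /=; first by rewrite muln1 addn0.
rewrite IH [in RHS]IH expnS; lia.
Qed.

Lemma bv_val_cons b s : bv_val (b :: s) = b * 2 ^ size s + bv_val s.
Proof. exact: (bv_val_cat [:: b]). Qed.

Lemma bv_val_lt s : bv_val s < 2 ^ size s.
Proof. by elim: s => [|[] s IH] //=; rewrite bv_val_cons expnS; lia. Qed.

Lemma bv_val_inj s t : size s = size t -> bv_val s = bv_val t -> s = t.
Proof.
elim: s t => [|b s IH] [|b' t] //= [st]; rewrite !bv_val_cons st.
have ltt := bv_val_lt t; have lts := bv_val_lt s; rewrite st in lts.
case/(mixed_radix_inj lts ltt) => bb' /(IH _ st) ->.
by case: b b' bb' => -[].
Qed.

Lemma bv_of_cons n k : tval (bv_of n.+1 k) = odd (k %/ 2 ^ n) :: bv_of n k.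
Proof.
rewrite /bv_of /= enum_ordSl /= subn0 -map_comp; congr (_ :: _).
by apply: eq_map => i; rewrite /= /bump leq0n; congr (odd (_ %/ 2 ^ _)); lia.
Qed.

Lemma bv_val_bv_of n k : bv_val (bv_of n k) = k %% 2 ^ n.
Proof.
elim: n => [|n IH]; first by rewrite expn0 modn1 (tuple0 (bv_of 0 k)).
rewrite bv_of_cons bv_val_cons size_tuple IH.
rewrite {3}(divn_eq k (2 ^ n)) expnS mulnC modn_mixed ?ltn_pmod ?expn_gt0 //.
by rewrite modn2 mulnC.
Qed.

Lemma tup_ofK n s : size s = n -> tval (tup_of n s) = s.
Proof.
move=> <-; apply: (@eq_from_nth _ false); rewrite size_tuple // => i lti.
by rewrite -(tnth_nth _ _ (Ordinal lti)) tnth_mktuple.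
Qed.

Lemma tuple_cat_split r k n (rk : r + k = n) (x : n.-tuple bool) :
  exists (xH : r.-tuple bool) (xL : k.-tuple bool), x = tup_of n (xH ++ xL).
Proof.
have sx : size x = r + k by rewrite size_tuple.
exists (tup_of r (take r x)), (tup_of k (drop r x)); apply: val_inj.
by rewrite /= !tup_ofK ?cat_take_drop ?size_takel ?size_drop ?sx ?addKn ?leq_addr.
Qed.

Lemma seq_as_tuple k (s : seq bool) : size s = k -> exists t : k.-tuple bool, s = t.
Proof. by move=> sk; exists (tup_of k s); rewrite tup_ofK. Qed.

Definition xors (s t : seq bool) : seq bool := [seq p.1 (+) p.2 | p <- zip s t].

Lemma size_xors s t : size s = size t -> size (xors s t) = size s.
Proof. by move=> st; rewrite size_map size_zip st minnn. Qed.

Lemma xors_cat s1 s2 t1 t2 :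
  size s1 = size t1 -> xors (s1 ++ s2) (t1 ++ t2) = xors s1 t1 ++ xors s2 t2.
Proof. by move=> st; rewrite /xors zip_cat // map_cat. Qed.

Lemma bv_xorE n (x y : n.-tuple bool) : tval (bv_xor x y) = xors x y.
Proof.
apply: (@eq_from_nth _ false); rewrite size_tuple ?size_xors ?size_tuple // => i lti.
rewrite -(tnth_nth _ _ (Ordinal lti)) tnth_mktuple /xors.
by rewrite (nth_map (false, false)) ?nth_zip ?size_zip ?size_tuple ?minnn //= !(tnth_nth false).
Qed.

Definition add_carry (u v : seq bool) (ci : bool) (w : seq bool) (co : bool) : Prop :=
  bv_val u + bv_val v + ci = bv_val w + co * 2 ^ size w.

Lemma bv_add_carry n (x y z : n.-tuple bool) :
  bv_add x y = z <-> exists co : bool, add_carry x y false z co.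
Proof.
have bv_addE : bv_val (bv_add x y) = (bv_val x + bv_val y) %% 2 ^ n.
  by rewrite bv_val_bv_of modn_mod.
rewrite /add_carry size_tuple addn0; split=> [<- | [co e]].
  exists (2 ^ n <= bv_val x + bv_val y); rewrite bv_addE -carry_split //.
  by have := bv_val_lt x; have := bv_val_lt y; rewrite !size_tuple; lia.
apply: val_inj; apply: bv_val_inj; rewrite ?size_tuple // bv_addE e addnC modnMDl modn_small //.
by have := bv_val_lt z; rewrite size_tuple.
Qed.

Lemma add_carry_cat uH uL vH vL wH wL ci co : size uL = size wL -> size vL = size wL ->
  add_carry (uH ++ uL) (vH ++ vL) ci (wH ++ wL) co <->
  exists c : bool, add_carry uL vL ci wL c /\ add_carry uH vH c wH co.
Proof.
rewrite /add_carry !bv_val_cat size_cat expnD => suw svw; rewrite suw svw.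
have := bv_val_lt uL; have := bv_val_lt vL; have := bv_val_lt wL.
rewrite suw svw; move: (2 ^ size wL) (2 ^ size wH) => K H ltw ltv ltu.
split=> [e | [c [el eh]]]; last first.
  have := congr1 (muln^~ K) eh; rewrite /= !mulnDl; lia.
set s := bv_val uL + bv_val vL + ci.
have ltsK : s < K * 2 by rewrite /s; have := leq_b1 ci; lia.
have K0 : 0 < K by apply: leq_ltn_trans ltw.
have [eH eL] : bv_val uH + bv_val vH + (K <= s) = bv_val wH + co * H /\ s %% K = bv_val wL.
  apply: (@mixed_radix_inj K); [exact: ltn_pmod | exact: ltw |].
  have := carry_split ltsK; rewrite /s !mulnDl; lia.
by exists (K <= s); rewrite {1}(carry_split ltsK) eL.
Qed.

Lemma bv_add_cat h l n (hl : h + l = n) (uH vH wH : h.-tuple bool) (uL vL wL : l.-tuple bool) :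
  bv_add (tup_of n (uH ++ uL)) (tup_of n (vH ++ vL)) = tup_of n (wH ++ wL) <->
  exists c o : bool, add_carry uL vL false wL c /\ add_carry uH vH c wH o.
Proof.
rewrite bv_add_carry !tup_ofK ?size_cat ?size_tuple //.
split=> [[o /add_carry_cat] | [c [o lohi]]]; rewrite ?size_tuple //.
  by case=> // c [lo hi]; exists c, o.
by exists o; apply/add_carry_cat; rewrite ?size_tuple //; exists c.
Qed.

Lemma XR_tup_cat r k n (rk : r + k = n) (xH yH : r.-tuple bool) (xL yL : k.-tuple bool) :
  XR r (tup_of n (xH ++ xL)) (tup_of n (yH ++ yL)) = tup_of n (bv_xor xL yL ++ bv_xor xH yH).
Proof.
rewrite /XR /bv_rotl; congr (tup_of n _).
rewrite bv_xorE !tup_ofK ?size_cat ?size_tuple // xors_cat ?size_tuple //.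
by rewrite -!bv_xorE -{1}(size_tuple (bv_xor xH yH)) rot_size_cat.
Qed.

(** * The three additions on one half *)

Definition oct_a (s : nat) : bool := odd (s %/ 4).
Definition oct_b (s : nat) : bool := odd (s %/ 2).
Definition oct_c (s : nat) : bool := odd s.
Definition oct (x y z : bool) : nat := 4 * x + 2 * y + z.

Lemma oct_aK x y z : oct_a (oct x y z) = x. Proof. by case: x y z => [] [] []. Qed.
Lemma oct_bK x y z : oct_b (oct x y z) = y. Proof. by case: x y z => [] [] []. Qed.
Lemma oct_cK x y z : oct_c (oct x y z) = z. Proof. by case: x y z => [] [] []. Qed.
Lemma oct_lt8 x y z : oct x y z < 8. Proof. by case: x y z => [] [] []. Qed.
Lemma octK s : s < 8 -> oct (oct_a s) (oct_b s) (oct_c s) = s.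
Proof. by do 8?case: s => [|s] //. Qed.

Lemma nat_of_bool_inj : injective nat_of_bool. Proof. by case=> [] []. Qed.

(* [i] and [o] code the triple of carries entering the three additions at the
   least significant end and leaving them at the most significant end. *)
Definition carry_feasible (a b c : seq bool) (i o : nat) : Prop :=
  exists x y X Y : seq bool,
    [/\ size x = size a, size y = size a, size X = size a & size Y = size a] /\
    [/\ add_carry x a (oct_a i) X (oct_a o), add_carry y b (oct_b i) Y (oct_b o)
      & add_carry (xors x y) c (oct_c i) (xors X Y) (oct_c o)].

Lemma carry_feasible_tuple k (a b c : k.-tuple bool) i o :
  carry_feasible a b c i o <->
  exists x y X Y : k.-tuple bool,
    [/\ add_carry x a (oct_a i) X (oct_a o), add_carry y b (oct_b i) Y (oct_b o)
      & add_carry (bv_xor x y) c (oct_c i) (bv_xor X Y) (oct_c o)].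
Proof.
split=> [[x [y [X [Y []]]]] | [x [y [X [Y eqs]]]]]; last first.
  by exists x, y, X, Y; rewrite !size_tuple -!bv_xorE.
rewrite size_tuple => -[/seq_as_tuple [{}x ->] /seq_as_tuple [{}y ->]].
move=> /seq_as_tuple [{}X ->] /seq_as_tuple [{}Y ->].
by rewrite -!bv_xorE; exists x, y, X, Y.
Qed.

Lemma XR_solvableP r k n (nrk : r + k = n) (a b c : k.-tuple bool) (a' b' c' : r.-tuple bool) :
  (exists x y : n.-tuple bool,
     XR r (bv_add x (tup_of n (a' ++ a))) (bv_add y (tup_of n (b' ++ b))) =
     bv_add (XR r x y) (tup_of n (c ++ c')))
  <-> exists cx cy e o1 o2 o3 : bool,
      carry_feasible a b c (oct false false e) (oct cx cy o3) /\
      carry_feasible a' b' c' (oct cx cy false) (oct o1 o2 e).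
Proof.
have nkr : k + r = n by rewrite addnC.
split=> [[x [y]] | [cx [cy [ce [o1 [o2 [o3 []]]]]]]].
  have [xH [xL ->]] := tuple_cat_split nrk x; have [yH [yL ->]] := tuple_cat_split nrk y.
  have [XH [XL eX]] := tuple_cat_split nrk (bv_add (tup_of n (xH ++ xL)) (tup_of n (a' ++ a))).
  have [YH [YL eY]] := tuple_cat_split nrk (bv_add (tup_of n (yH ++ yL)) (tup_of n (b' ++ b))).
  rewrite eX eY !(XR_tup_cat nrk) => /esym/(bv_add_cat nkr) [ce [o3 [lc hc]]].
  have [cx [o1 [la ha]]] := (bv_add_cat nrk _ _ _ _ _ _).1 eX.
  have [cy [o2 [lb hb]]] := (bv_add_cat nrk _ _ _ _ _ _).1 eY.
  exists cx, cy, ce, o1, o2, o3; split; apply/carry_feasible_tuple.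
    by exists xL, yL, XL, YL; rewrite !oct_aK !oct_bK !oct_cK.
  by exists xH, yH, XH, YH; rewrite !oct_aK !oct_bK !oct_cK.
move=> /carry_feasible_tuple [xL [yL [XL [YL]]]]; rewrite !oct_aK !oct_bK !oct_cK => -[la lb lc].
move=> /carry_feasible_tuple [xH [yH [XH [YH]]]]; rewrite !oct_aK !oct_bK !oct_cK => -[ha hb hc].
exists (tup_of n (xH ++ xL)), (tup_of n (yH ++ yL)).
have -> : bv_add (tup_of n (xH ++ xL)) (tup_of n (a' ++ a)) = tup_of n (XH ++ XL).
  by apply/(bv_add_cat nrk); exists cx, o1.
have -> : bv_add (tup_of n (yH ++ yL)) (tup_of n (b' ++ b)) = tup_of n (YH ++ YL).
  by apply/(bv_add_cat nrk); exists cy, o2.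
by rewrite !(XR_tup_cat nrk); symmetry; apply/(bv_add_cat nkr); exists ce, o3.
Qed.

Definition feasible (w : seq nat) : nat -> nat -> Prop :=
  carry_feasible (map oct_a w) (map oct_b w) (map oct_c w).

Lemma omega_octE (a b c : seq bool) : size b = size a -> size c = size a ->
  [/\ map oct_a (omega a b c) = a, map oct_b (omega a b c) = b & map oct_c (omega a b c) = c].
Proof.
elim: a b c => [|x a IH] [|y b] [|z c] //= [sb] [sc].
by have [-> -> ->] := IH _ _ sb sc; rewrite oct_aK oct_bK oct_cK.
Qed.

Lemma feasible_omega (a b c : seq bool) : size b = size a -> size c = size a ->
  feasible (omega a b c) = carry_feasible a b c.
Proof. by move=> sb sc; have [ea eb ec] := omega_octE sb sc; rewrite /feasible ea eb ec. Qed.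

Lemma omega_lt8 (a b c : seq bool) : all (fun s => s < 8) (omega a b c).
Proof. by apply/allP => _ /mapP [[[x y] z] _ ->]; apply: oct_lt8. Qed.

Lemma feasible_nil i o : i < 8 -> o < 8 -> feasible [::] i o <-> i = o.
Proof.
move=> i8 o8; split=> [|<-]; last first.
  by exists [::], [::], [::], [::]; split; split; rewrite /add_carry /= ?muln1 ?addn0.
case=> x [y [X [Y [[/size0nil -> /size0nil -> /size0nil -> /size0nil ->]]]]].
rewrite /add_carry /= expn0 !muln1 !add0n.
case=> /nat_of_bool_inj ea /nat_of_bool_inj eb /nat_of_bool_inj ec.
by rewrite -(octK i8) -(octK o8) ea eb ec.
Qed.

Definition exists_bool (P : pred bool) : bool := P false || P true.

Lemma exists_boolP (P : pred bool) : reflect (exists b, P b) (exists_bool P).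
Proof. by apply: (iffP orP) => [[] Pb | [[] Pb]]; [exists false | exists true | right | left]. Qed.

Definition full_adder (u v ci z co : bool) : bool := u + v + ci == z + co * 2.

Lemma add_carry1P u v ci z co :
  reflect (add_carry [:: u] [:: v] ci [:: z] co) (full_adder u v ci z co).
Proof. rewrite /add_carry /bv_val /= !muln0 !add0n expn1; exact: eqP. Qed.

Definition carry_step (s i o : nat) : bool :=
  exists_bool (fun x => exists_bool (fun y => exists_bool (fun X => exists_bool (fun Y =>
    [&& full_adder x (oct_a s) (oct_a i) X (oct_a o),
        full_adder y (oct_b s) (oct_b i) Y (oct_b o) &
        full_adder (x (+) y) (oct_c s) (oct_c i) (X (+) Y) (oct_c o)])))).

Lemma carry_stepP s i o :
  reflect (exists x y X Y : bool,
    [/\ full_adder x (oct_a s) (oct_a i) X (oct_a o),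
        full_adder y (oct_b s) (oct_b i) Y (oct_b o) &
        full_adder (x (+) y) (oct_c s) (oct_c i) (X (+) Y) (oct_c o)])
  (carry_step s i o).
Proof.
rewrite /carry_step; apply: (iffP (exists_boolP _)) => [[x] | ].
  by case/exists_boolP=> y /exists_boolP [X /exists_boolP [Y /and3P]]; exists x, y, X, Y.
case=> x [y [X [Y /and3P fxy]]]; exists x; apply/exists_boolP; exists y.
by apply/exists_boolP; exists X; apply/exists_boolP; exists Y.
Qed.

Lemma feasible_rcons w s i o :
  feasible (rcons w s) i o <-> exists2 m, m < 8 & carry_step s i m /\ feasible w m o.
Proof.
rewrite /feasible /carry_feasible !map_rcons !size_rcons size_map -!cats1.
split=> [[x [y [X [Y [[sx sy sX sY] [ea eb ec]]]]]] | [m m8 []]].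
  case/lastP: x sx ea ec => // x xb; rewrite size_rcons -cats1 => -[sx] ea ec.
  case/lastP: y sy eb ec => // y yb; rewrite size_rcons -cats1 => -[sy] eb ec.
  case/lastP: X sX ea ec => // X Xb; rewrite size_rcons -cats1 => -[sX] ea ec.
  case/lastP: Y sY eb ec => // Y Yb; rewrite size_rcons -cats1 => -[sY] eb ec.
  rewrite !xors_cat ?sx ?sy ?sX ?sY //= in ec.
  case/add_carry_cat: ea => // ca [/add_carry1P fa ea].
  case/add_carry_cat: eb => // cb [/add_carry1P fb eb].
  case/add_carry_cat: ec => // cc [/add_carry1P fc ec].
  exists (oct ca cb cc); first exact: oct_lt8.
  split; first by apply/carry_stepP; exists xb, yb, Xb, Yb; rewrite !oct_aK !oct_bK !oct_cK.
  by exists x, y, X, Y; rewrite !oct_aK !oct_bK !oct_cK.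
case/carry_stepP=> xb [yb [Xb [Yb [fa fb fc]]]].
case=> x [y [X [Y [[sx sy sX sY] [ea eb ec]]]]].
exists (x ++ [:: xb]), (y ++ [:: yb]), (X ++ [:: Xb]), (Y ++ [:: Yb]).
rewrite !size_cat sx sy sX sY addn1 !xors_cat ?sx ?sy ?sX ?sY //.
split=> //; split; apply/add_carry_cat => //.
- by exists (oct_a m); split=> //; apply/add_carry1P.
- by exists (oct_b m); split=> //; apply/add_carry1P.
- by exists (oct_c m); split=> //; apply/add_carry1P.
Qed.

(* [vm_compute] evaluates the closed constant [carry_table] only once, so the
   automata below look transitions up instead of recomputing [carry_step]. *)
Definition carry_table : seq (seq (seq bool)) :=
  [seq [seq [seq carry_step s i o | o <- iota 0 8] | i <- iota 0 8] | s <- iota 0 8].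

Definition carry_step_memo (s i o : nat) : bool :=
  nth false (nth [::] (nth [::] carry_table s) i) o.

Lemma carry_step_memoE s i o :
  s < 8 -> i < 8 -> o < 8 -> carry_step_memo s i o = carry_step s i o.
Proof. by move=> s8 i8 o8; rewrite /carry_step_memo !(nth_map 0) ?size_iota // !nth_iota. Qed.

Definition bmx_at (M : seq (seq bool)) (i j : nat) : bool := nth false (nth [::] M i) j.

Lemma bmx_at_mkseq (f : nat -> nat -> bool) np i j :
  i < 8 -> j < np -> bmx_at (mkseq (fun i => mkseq (f i) np) 8) i j = f i j.
Proof. by move=> i8 jnp; rewrite /bmx_at !nth_mkseq. Qed.

Definition carry_start (pr : nat -> nat) (np : nat) : seq (seq bool) :=
  mkseq (fun i => mkseq (fun j => pr i == j) np) 8.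

Definition carry_next (np : nat) (M : seq (seq bool)) (s : nat) : seq (seq bool) :=
  mkseq (fun i => mkseq (fun j =>
    has (fun m => carry_step_memo s i m && bmx_at M m j) (iota 0 8)) np) 8.

Definition carry_run (pr : nat -> nat) (np : nat) (w : seq nat) : seq (seq bool) :=
  foldl (carry_next np) (carry_start pr np) w.

Lemma carry_runP pr np w i j : all (fun s => s < 8) w -> i < 8 -> j < np ->
  reflect (exists2 o, o < 8 & pr o = j /\ feasible w i o) (bmx_at (carry_run pr np w) i j).
Proof.
elim/last_ind: w i => [|w s IH] i w8 i8 jnp.
  rewrite bmx_at_mkseq //; apply: (iffP eqP) => [<- | [o o8 [<- /feasible_nil]]].
    by exists i => //; split=> //; apply/feasible_nil.
  by move=> /(_ i8 o8) ->.
move: w8; rewrite all_rcons => /andP [s8 w8].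
rewrite /carry_run foldl_rcons -/(carry_run pr np w) bmx_at_mkseq //.
apply: (iffP hasP) => [[m] | [o o8 [pro /feasible_rcons [m m8 [stm fm]]]]].
  rewrite mem_iota => m8 /andP []; rewrite carry_step_memoE // => stm.
  case/(IH _ w8 m8 jnp) => o o8 [pro fm].
  by exists o => //; split=> //; apply/feasible_rcons; exists m.
exists m; first by rewrite mem_iota.
by rewrite carry_step_memoE // stm; apply/IH => //; exists o.
Qed.

(** * Pattern automata *)

Definition is_star (it : pitem) : bool := if it is St _ then true else false.

Fixpoint pderiv (p : pattern) (s : nat) : seq nat :=
  match p with
  | [::] => [::]
  | Sy c :: _ => if c s then [:: 1] else [::]
  | St c :: p' => (if c s then [:: 0] else [::]) ++ map succn (pderiv p' s)
  end.

Lemma matchp_nil p : matchp p [::] = all is_star p.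
Proof. by elim: p => [|[c|c] p IH] //=; rewrite IH orbF. Qed.

Lemma matchp_cons p s w : matchp p (s :: w) = has (fun k => matchp (drop k p) w) (pderiv p s).
Proof.
elim: p => [|[c|c] p IH] //=; first by case: (c s) => //=; rewrite drop0 orbF.
by rewrite has_cat has_map IH orbC; case: (c s) => //=; rewrite orbF.
Qed.

Lemma pderiv_le p s k : k \in pderiv p s -> k <= size p.
Proof.
elim: p k => [|[c|c] p IH] k //=; first by case: (c s) => //; rewrite inE => /eqP ->.
rewrite mem_cat => /orP [|/mapP [k' /IH k'p ->] //].
by case: (c s) => //; rewrite inE => /eqP ->.
Qed.

(* A state is the set of positions [i] such that the rest of the word may still
   match [drop i p]. *)
Definition nfa_start (p : pattern) : seq bool := mkseq (eq_op 0) (size p).+1.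

Definition nfa_step (p : pattern) (v : seq bool) (s : nat) : seq bool :=
  let next := flatten [seq map (addn i) (pderiv (drop i p) s)
                      | i <- iota 0 (size p).+1 & nth false v i] in
  mkseq (mem next) (size p).+1.

Definition nfa_accept (p : pattern) (v : seq bool) : bool :=
  has (fun i => nth false v i && all is_star (drop i p)) (iota 0 (size p).+1).

Definition nfa_run (p : pattern) (w : seq nat) : seq bool := foldl (nfa_step p) (nfa_start p) w.

Definition nfa_matches (p : pattern) (v : seq bool) (w : seq nat) : bool :=
  has (fun i => nth false v i && matchp (drop i p) w) (iota 0 (size p).+1).

Lemma nfa_matches_step p v s w : nfa_matches p v (s :: w) = nfa_matches p (nfa_step p v s) w.
Proof.
apply/hasP/hasP => [[i ip /andP [vi]] | [j jp]].
  rewrite matchp_cons => /hasP [k kd mk]; have := pderiv_le kd.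
  move: ip; rewrite size_drop mem_iota /= => ip kp.
  have ikp : i + k < (size p).+1 by lia.
  have ikI : i + k \in iota 0 (size p).+1 by rewrite mem_iota.
  exists (i + k) => //.
  rewrite nth_mkseq // addnC -drop_drop mk andbT; apply/flattenP.
  exists (map (addn i) (pderiv (drop i p) s)); last by apply/mapP; exists k; rewrite // addnC.
  by apply/mapP; exists i; rewrite // mem_filter vi mem_iota.
move: jp; rewrite mem_iota => /= jp; rewrite nth_mkseq //.
case/andP => /flattenP [l /mapP [i]]; rewrite mem_filter => /andP [vi ip] -> /mapP [k kd ->] mk.
exists i => //; rewrite vi matchp_cons; apply/hasP; exists k => //.
by rewrite drop_drop addnC.
Qed.

Lemma nfa_matches_accept p v w : nfa_matches p v w = nfa_accept p (foldl (nfa_step p) v w).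
Proof.
elim: w v => [|s w IH] v /=; last by rewrite nfa_matches_step IH.
by apply: eq_has => i; rewrite matchp_nil.
Qed.

Lemma matchp_nfa p w : matchp p w = nfa_accept p (nfa_run p w).
Proof.
rewrite /nfa_run -nfa_matches_accept /nfa_matches /= drop0.
rewrite (@eq_in_has _ _ pred0) ?has_pred0 ?orbF // => i; rewrite mem_iota => /andP [i1 ip].
by rewrite nth_mkseq // eq_sym gtn_eqF.
Qed.

(** * Reduction to a finite check *)

Definition lo_state := (seq (seq bool) * seq (seq (seq bool)))%type.
Definition hi_state := (seq (seq bool) * seq (seq bool))%type.

(* Of the carries leaving the low half only those of [x + alpha] and [y + beta]
   (the digit [o %/ 2]) enter the high half; of those leaving the high half only
   that of the third addition (the digit [o %% 2]) enters the low half. *)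
Definition lo_run (w : seq nat) : lo_state :=
  (carry_run (divn^~ 2) 4 w, [seq [seq nfa_run p w | p <- Ppats X] | X <- iota 1 7]).

Definition hi_run (w : seq nat) : hi_state :=
  (carry_run (modn^~ 2) 2 w, [seq nfa_run (Mpat X) w | X <- iota 1 7]).

Definition lo_step (st : lo_state) (s : nat) : lo_state :=
  (carry_next 4 st.1 s,
   [seq [seq nfa_step pv.1 pv.2 s | pv <- zip (Ppats Xv.1) Xv.2] | Xv <- zip (iota 1 7) st.2]).

Definition hi_step (st : hi_state) (s : nat) : hi_state :=
  (carry_next 2 st.1 s, [seq nfa_step (Mpat Xv.1) Xv.2 s | Xv <- zip (iota 1 7) st.2]).

Lemma zip_map_r (S T : Type) (f : S -> T) (s : seq S) : zip s (map f s) = [seq (x, f x) | x <- s].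
Proof. by rewrite -{1}(map_id s) zip_map. Qed.

Lemma lo_run_foldl w : foldl lo_step (lo_run [::]) w = lo_run w.
Proof.
elim/last_ind: w => [|w s IH] //; rewrite foldl_rcons IH /lo_step /lo_run /carry_run foldl_rcons.
congr pair; rewrite zip_map_r -map_comp; apply: eq_map => X /=.
by rewrite zip_map_r -map_comp; apply: eq_map => p; rewrite /nfa_run foldl_rcons.
Qed.

Lemma hi_run_foldl w : foldl hi_step (hi_run [::]) w = hi_run w.
Proof.
elim/last_ind: w => [|w s IH] //; rewrite foldl_rcons IH /hi_step /hi_run /carry_run foldl_rcons.
by congr pair; rewrite zip_map_r -map_comp; apply: eq_map => X; rewrite /= /nfa_run foldl_rcons.
Qed.

Definition no_solution_test (l : lo_state) (h : hi_state) : bool :=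
  ~~ exists_bool (fun cx => exists_bool (fun cy => exists_bool (fun e =>
       bmx_at l.1 e (2 * cx + cy) && bmx_at h.1 (oct cx cy false) e))).

Definition pattern_test (l : lo_state) (h : hi_state) : bool :=
  has (fun X => nfa_accept (Mpat X) (nth [::] h.2 X.-1) &&
                has (fun pv => nfa_accept pv.1 pv.2) (zip (Ppats X) (nth [::] l.2 X.-1)))
      (iota 1 7).

Lemma oct_div2 o (x y : bool) : o < 8 -> o %/ 2 = 2 * x + y -> o = oct x y (oct_c o).
Proof. by do 8?case: o => [|o] //; case: x y => [] []. Qed.

Lemma oct_mod2 o (z : bool) : o < 8 -> o %% 2 = z -> o = oct (oct_a o) (oct_b o) z.
Proof.
move=> o8 oz; have -> : z = oct_c o by apply: nat_of_bool_inj; rewrite -oz modn2.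
by rewrite octK.
Qed.

Lemma lo_entryP w (cx cy e : bool) : all (fun s => s < 8) w ->
  reflect (exists o3 : bool, feasible w (oct false false e) (oct cx cy o3))
          (bmx_at (lo_run w).1 e (2 * cx + cy)).
Proof.
have -> : nat_of_bool e = oct false false e by case: e.
move=> w8; apply: (iffP (carry_runP _ _ _ _)); rewrite ?oct_lt8 //; first by case: cx cy => [] [].
  by case=> o o8 [/(oct_div2 o8) eo fo]; exists (oct_c o); rewrite -eo.
case=> o3 fo; exists (oct cx cy o3); rewrite ?oct_lt8 //.
by split=> //; case: cx cy o3 {fo} => [] [] [].
Qed.

Lemma hi_entryP w (cx cy e : bool) : all (fun s => s < 8) w ->
  reflect (exists o1 o2 : bool, feasible w (oct cx cy false) (oct o1 o2 e))
          (bmx_at (hi_run w).1 (oct cx cy false) e).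
Proof.
move=> w8; apply: (iffP (carry_runP _ _ _ _)); rewrite ?oct_lt8 //; first by case: e.
  by case=> o o8 [/(oct_mod2 o8) eo fo]; exists (oct_a o), (oct_b o); rewrite -eo.
case=> o1 [o2 fo]; exists (oct o1 o2 e); rewrite ?oct_lt8 //.
by split=> //; case: o1 o2 e {fo} => [] [] [].
Qed.

Lemma no_solution_testP wL wH : all (fun s => s < 8) wL -> all (fun s => s < 8) wH ->
  no_solution_test (lo_run wL) (hi_run wH) <->
  ~ exists cx cy e o1 o2 o3 : bool,
      feasible wL (oct false false e) (oct cx cy o3) /\ feasible wH (oct cx cy false) (oct o1 o2 e).
Proof.
move=> wL8 wH8; split=> [/negP nosol [cx [cy [e [o1 [o2 [o3 [fL fH]]]]]]] | nosol]; last first.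
  apply/negP => /exists_boolP [cx /exists_boolP [cy /exists_boolP [e /andP []]]].
  case/(lo_entryP _ _ _ wL8) => o3 fL /(hi_entryP _ _ _ wH8) [o1 [o2 fH]].
  by apply: nosol; exists cx, cy, e, o1, o2, o3.
apply: nosol; apply/exists_boolP; exists cx; apply/exists_boolP; exists cy; apply/exists_boolP.
exists e; apply/andP; split; first by apply/lo_entryP => //; exists o3.
by apply/hi_entryP => //; exists o1, o2.
Qed.

Lemma pattern_testE wL wH : pattern_test (lo_run wL) (hi_run wH) =
  has (fun X => matchp (Mpat X) wH && has (fun p => matchp p wL) (Ppats X)) (iota 1 7).
Proof.
apply: eq_in_has => X; rewrite mem_iota => /andP [X1 X7].
have X7' : X.-1 < 7 by lia.
rewrite /pattern_test !(nth_map 0) ?size_iota // nth_iota // add1n prednK //.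
by rewrite -matchp_nfa zip_map_r has_map; congr andb; apply: eq_has => p; rewrite /= -matchp_nfa.
Qed.

Inductive trie := Leaf | Node of option nat & trie & trie.

Fixpoint trie_find (t : trie) (key : seq bool) : option nat :=
  match t, key with
  | Leaf, _ => None
  | Node v _ _, [::] => v
  | Node _ l r, b :: key' => trie_find (if b then r else l) key'
  end.

Fixpoint trie_add (t : trie) (key : seq bool) (k : nat) : trie :=
  let: (v, l, r) := if t is Node v l r then (v, l, r) else (None, Leaf, Leaf) in
  match key with
  | [::] => Node (Some k) l r
  | b :: key' => if b then Node v l (trie_add r key' k) else Node v (trie_add l key' k) r
  end.

Section Exploration.

Variables (T : eqType) (step : T -> nat -> T).

Definition closed_graph (x0 : T) (R : seq T) (succ : seq (seq nat)) : bool :=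
  [&& 0 < size R, nth x0 R 0 == x0 &
  all (fun k => all (fun s => let k' := nth 0 (nth [::] succ k) s in
         (k' < size R) && (step (nth x0 R k) s == nth x0 R k')) (iota 0 8)) (iota 0 (size R))].

Lemma closed_graph_reach x0 R succ w :
  closed_graph x0 R succ -> all (fun s => s < 8) w -> foldl step x0 w \in R.
Proof.
case/and3P=> R0 /eqP R_x0 /allP succ_ok.
suff reach k : k < size R -> all (fun s => s < 8) w -> foldl step (nth x0 R k) w \in R.
  by rewrite -{1}R_x0; apply: reach.
elim: w k => [|s w IH] k kR /=; first by rewrite mem_nth.
case/andP=> s8 w8.
have kI : k \in iota 0 (size R) by rewrite mem_iota.
have sI : s \in iota 0 8 by rewrite mem_iota.
have /allP succ_k := succ_ok k kI.
by have /andP [k'R /eqP ->] := succ_k s sI; apply: IH.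
Qed.

Variable key : T -> seq bool.

Fixpoint bfs (fuel : nat) (todo : seq T) (seen : trie) (count : nat) (found : seq T) :
    seq T * trie :=
  if fuel is fuel'.+1 then
    if todo is x :: todo' then
      let visit '(new, t, c) s :=
        let y := step x s in
        if trie_find t (key y) then (new, t, c) else (rcons new y, trie_add t (key y) c, c.+1) in
      let: (new, seen', count') := foldl visit ([::], seen, count) (iota 0 8) in
      bfs fuel' (todo' ++ new) seen' count' (found ++ new)
    else (found, seen)
  else (found, seen).

(* The search is untrusted: soundness rests on [closed_graph] alone. *)
Definition explore (x0 : T) : seq T * seq (seq nat) :=
  let: (R, t) := bfs 1000 [:: x0] (trie_add Leaf (key x0) 0) 1 [:: x0] in
  (R, [seq [seq odflt 0 (trie_find t (key (step x s))) | s <- iota 0 8] | x <- R]).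

End Exploration.

Definition lo_key (st : lo_state) : seq bool := flatten st.1 ++ flatten (flatten st.2).
Definition hi_key (st : hi_state) : seq bool := flatten st.1 ++ flatten st.2.

Definition lo_graph := explore lo_step lo_key (lo_run [::]).
Definition hi_graph := explore hi_step hi_key (hi_run [::]).

Lemma lo_graph_closed : closed_graph lo_step (lo_run [::]) lo_graph.1 lo_graph.2.
Proof. by vm_compute. Qed.

Lemma hi_graph_closed : closed_graph hi_step (hi_run [::]) hi_graph.1 hi_graph.2.
Proof. by vm_compute. Qed.

Lemma tests_agree_on_graphs :
  all (fun l => all (fun h => no_solution_test l h == pattern_test l h) hi_graph.1) lo_graph.1.
Proof. by vm_compute. Qed.

Lemma no_solution_testE wL wH : all (fun s => s < 8) wL -> all (fun s => s < 8) wH ->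
  no_solution_test (lo_run wL) (hi_run wH) = pattern_test (lo_run wL) (hi_run wH).
Proof.
move=> wL8 wH8; have := closed_graph_reach lo_graph_closed wL8.
have := closed_graph_reach hi_graph_closed wH8; rewrite lo_run_foldl hi_run_foldl => hR lR.
by have /allP/(_ _ lR)/allP/(_ _ hR)/eqP := tests_agree_on_graphs.
Qed.

Lemma adpXR_eq0 n r (A B G : n.-tuple bool) :
  adpXR r A B G = 0%R <->
  ~ exists x y : n.-tuple bool, XR r (bv_add x A) (bv_add y B) = bv_add (XR r x y) G.
Proof.
rewrite /adpXR /adp; split=> [|no_xy].
  move/eqP; rewrite mulf_eq0 invr_eq0 !pnatr_eq0 expn_eq0 /= orbF => /eqP/card0_eq no_xy.
  by case=> x [y e]; have := no_xy (x, y); rewrite !inE /= e eqxx.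
apply/eqP; rewrite mulf_eq0 pnatr_eq0; apply/orP; left; apply/eqP/eq_card0 => -[x y].
by rewrite !inE /=; apply/negP => /eqP e; apply: no_xy; exists x, y.
Qed.

Theorem theorem9 (n r : nat) (hn : 2 <= n) (hr : 1 <= r <= n - 1)
  (a b c : (n - r).-tuple bool) (a' b' c' : r.-tuple bool) :
  adpXR r (tup_of n (a' ++ a)) (tup_of n (b' ++ b)) (tup_of n (c ++ c')) = 0%R
  <->
  exists X : nat, [/\ 1 <= X <= 7,
    matchp (Mpat X) (omega a' b' c') &
    has (fun p => matchp p (omega a b c)) (Ppats X)].
Proof.
have nrk : r + (n - r) = n by lia.
have [wL8 wH8] := (omega_lt8 a b c, omega_lt8 a' b' c').
rewrite adpXR_eq0 (XR_solvableP nrk) -!feasible_omega ?size_tuple //.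
rewrite -no_solution_testP // no_solution_testE // pattern_testE.
split=> [/hasP [X] | [X [X17 mH mL]]].
  by rewrite mem_iota => X17 /andP [mH mL]; exists X; split=> //; lia.
by apply/hasP; exists X; rewrite ?mem_iota ?mH //; lia.
Qed.
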